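(* Let $A \in \mathbb{R}^{n\times d_1}$ and $B \in \mathbb{R}^{n\times d_2}$, and let $M = [A \;\; B] \in \mathbb{R}^{n\times(d_1+d_2)}$ be their horizontal concatenation. For a real matrix $C$ with $k$ columns write $\sigma_{\max}(C) = \max_{z\in\mathbb{R}^k,\ \|z\|=1}\|Cz\|$ and $\sigma_{\min}(C) = \min_{z\in\mathbb{R}^k,\ \|z\|=1}\|Cz\|$ (Euclidean norms), and, when $\sigma_{\min}(C)>0$, $\kappa(C) = \sigma_{\max}(C)/\sigma_{\min}(C)$. Set $$s_{\max} = \max\{\sigma_{\max}(A),\sigma_{\max}(B)\},\qquad s_{\min} = \min\{\sigma_{\min}(A),\sigma_{\min}(B)\},$$ $$\rho = \|A^\top B\|_2,\qquad \tau = \frac{\max\{\sigma_{\max}(A),\sigma_{\max}(B)\}}{\min\{\sigma_{\max}(A),\sigma_{\max}(B)\}},\qquad \kappa_{\max} = \max\{\kappa(A),\kappa(B)\}.$$ Assume $\rho < s_{\min}^2$. Then $\sigma_{\max}(M)^2 \le s_{\max}^2 + \rho$, $\sigma_{\min}(M)^2 \ge s_{\min}^2 - \rho$, and $$\kappa(M) \;\le\; \sqrt{\frac{s_{\max}^2+\rho}{s_{\min}^2-\rho}} \;\le\; \sqrt{\frac{1+\rho/s_{\max}^2}{1-\rho/s_{\min}^2}}\cdot\frac{s_{\max}}{s_{\min}} \;\le\; \tau\sqrt{\frac{1+\rho/s_{\max}^2}{1-\rho/s_{\min}^2}}\;\kappa_{\max}.$$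
   Context: $\|\cdot\|_2$ denotes the spectral (operator 2-) norm. $\sigma_{\max}$ and $\sigma_{\min}$ are the largest and smallest singular values in the sense defined in the claim (the minimum of $\|Cz\|$ over unit vectors $z$ in the column space dimension), and $\kappa$ is the spectral condition number. *)

From HB Require Import structures.
From mathcomp Require Import all_boot all_order all_algebra.
From mathcomp Require Import boolp classical_sets reals.
Set Implicit Arguments. Unset Strict Implicit. Unset Printing Implicit Defensive.
Import Order.TTheory GRing.Theory Num.Theory.
Local Open Scope classical_set_scope.
Local Open Scope ring_scope.

Definition vnorm (R : realType) (k : nat) (z : 'cV[R]_k) : R :=
  Num.sqrt (\sum_(i < k) (z i 0) ^+ 2).

Definition sigma_max (R : realType) (n k : nat) (C : 'M[R]_(n, k)) : R :=
  sup [set vnorm (C *m z) | z in [set z : 'cV[R]_k | vnorm z = 1]].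

Definition sigma_min (R : realType) (n k : nat) (C : 'M[R]_(n, k)) : R :=
  inf [set vnorm (C *m z) | z in [set z : 'cV[R]_k | vnorm z = 1]].

Definition spec_norm (R : realType) (n k : nat) (C : 'M[R]_(n, k)) : R :=
  sigma_max C.

(* spectral condition number (meaningful when sigma_min C > 0) *)
Definition kappa (R : realType) (n k : nat) (C : 'M[R]_(n, k)) : R :=
  sigma_max C / sigma_min C.

(* Split a unit vector z = (x; y) along the blocks of M = [A B]:
   ||M z||^2 = ||A x||^2 + ||B y||^2 + 2 x^T (A^T B) y.
   As ||x||^2 + ||y||^2 = 1, the first two terms lie between s_min^2 and
   s_max^2, while 2 |x^T G y| <= ||G|| (||x||^2 + ||y||^2) bounds the cross term
   by rho.  Taking the supremum and infimum over z bounds sigma_max(M)^2 and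
   sigma_min(M)^2; the estimates of kappa(M) are then inequalities between
   reals. *)

From HB Require Import structures.
From mathcomp Require Import all_boot all_order all_algebra.
From mathcomp Require Import boolp classical_sets reals.
From mathcomp Require Import ring lra.
Import Order.TTheory GRing.Theory Num.Theory.
Local Open Scope classical_set_scope.
Local Open Scope ring_scope.
Set Implicit Arguments. Unset Strict Implicit. Unset Printing Implicit Defensive.

Section RealBounds.
Variable R : rcfType.
Implicit Types a b p q r s t : R.

Lemma ler_div_sqrt s t a b :
  0 <= s -> 0 <= t -> s ^+ 2 <= a -> 0 < b -> b <= t ^+ 2 ->
  s / t <= Num.sqrt (a / b).
Proof.
move=> s0 t0 sa b0 bt.
have t2_gt0 : 0 < t ^+ 2 := lt_le_trans b0 bt.
rewrite -[s / t]ger0_norm ?divr_ge0 // -sqrtr_sqr ler_sqrt; last first.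
  by rewrite divr_ge0 ?(le_trans (sqr_ge0 s) sa) ?ltW.
rewrite expr_div_n; apply: ler_pM; rewrite ?invr_ge0 ?sqr_ge0 //.
by rewrite lef_pV2 ?posrE.
Qed.

Lemma sqrt_div_factor p q r : 0 < p -> 0 < q -> r < q ^+ 2 ->
  Num.sqrt ((p ^+ 2 + r) / (q ^+ 2 - r))
  = Num.sqrt ((1 + r / p ^+ 2) / (1 - r / q ^+ 2)) * (p / q).
Proof.
move=> p0 q0 rq; have pq0 : 0 <= p / q by rewrite divr_ge0 ?ltW.
rewrite -[p / q]ger0_norm // -sqrtr_sqr [RHS]mulrC -sqrtrM ?sqr_ge0 //.
congr Num.sqrt; field.
by rewrite !gt_eqF // ?subr_gt0 // exprn_gt0.
Qed.

Lemma max_div_min_le a1 a2 b1 b2 :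
  0 < b1 -> 0 < b2 -> b1 <= a1 -> b2 <= a2 ->
  Num.max a1 a2 / Num.min b1 b2
  <= Num.max a1 a2 / Num.min a1 a2 * Num.max (a1 / b1) (a2 / b2).
Proof.
move=> b1_gt0 b2_gt0 ba1 ba2.
have mina_gt0 : 0 < Num.min a1 a2.
  by rewrite lt_min (lt_le_trans b1_gt0) ?(lt_le_trans b2_gt0).
have maxa_ge0 : 0 <= Num.max a1 a2 by rewrite le_max ltW ?(lt_le_trans b1_gt0).
have -> : Num.max a1 a2 / Num.min b1 b2
    = Num.max a1 a2 / Num.min a1 a2 * (Num.min a1 a2 / Num.min b1 b2).
  by rewrite mulrA divfK // lt0r_neq0.
apply: ler_wpM2l; first exact: divr_ge0 maxa_ge0 (ltW mina_gt0).
have [b12|b21] := leP b1 b2.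
- rewrite le_max; apply/orP; left.
  by apply: ler_wpM2r; rewrite ?invr_ge0 ?(ltW b1_gt0) ?ge_min ?lexx.
- rewrite le_max; apply/orP; right.
  by apply: ler_wpM2r; rewrite ?invr_ge0 ?(ltW b2_gt0) ?ge_min ?lexx ?orbT.
Qed.

End RealBounds.

Section Vectors.
Variable R : realType.
Implicit Types k : nat.

Definition sqnorm k (z : 'cV[R]_k) : R := \sum_(i < k) z i 0 ^+ 2.

Definition dotv k (u v : 'cV[R]_k) : R := \sum_(i < k) u i 0 * v i 0.

Lemma sqnorm_ge0 k (z : 'cV[R]_k) : 0 <= sqnorm z.
Proof. by apply: sumr_ge0 => i _; apply: sqr_ge0. Qed.

Lemma sqr_vnorm k (z : 'cV[R]_k) : vnorm z ^+ 2 = sqnorm z.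
Proof. exact/sqr_sqrtr/sqnorm_ge0. Qed.

Lemma sqnorm_eq0 k (z : 'cV[R]_k) : (sqnorm z == 0) = (z == 0).
Proof.
apply/eqP/eqP => [z0|->]; last first.
  by rewrite /sqnorm big1 // => i _; rewrite mxE expr2 mul0r.
apply/matrixP => i j; rewrite (ord1 j) mxE.
have /eqP := psumr_eq0P (fun i _ => sqr_ge0 (z i 0)) z0 (i := i) isT.
by rewrite sqrf_eq0 => /eqP.
Qed.

Lemma sqnorm0 k : sqnorm (0 : 'cV[R]_k) = 0.
Proof. by apply/eqP; rewrite sqnorm_eq0. Qed.

Lemma sqnormZ k a (z : 'cV[R]_k) : sqnorm (a *: z) = a ^+ 2 * sqnorm z.
Proof. by rewrite /sqnorm mulr_sumr; apply: eq_bigr => i _; rewrite mxE exprMn. Qed.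

Lemma vnormE k (z : 'cV[R]_k) : vnorm z = Num.sqrt (sqnorm z).
Proof. by []. Qed.

Lemma vnorm_ge0 k (z : 'cV[R]_k) : 0 <= vnorm z.
Proof. exact: sqrtr_ge0. Qed.

Lemma vnormZ k a (z : 'cV[R]_k) : vnorm (a *: z) = `|a| * vnorm z.
Proof. by rewrite !vnormE sqnormZ sqrtrM ?sqr_ge0 // sqrtr_sqr. Qed.

Lemma sqnormD k (u v : 'cV[R]_k) :
  sqnorm (u + v) = sqnorm u + sqnorm v + 2 * dotv u v.
Proof.
rewrite /sqnorm /dotv mulr_sumr -!big_split /=; apply: eq_bigr => i _.
by rewrite mxE; ring.
Qed.

Lemma sqnorm_col_mx k1 k2 (x : 'cV[R]_k1) (y : 'cV[R]_k2) :
  sqnorm (col_mx x y) = sqnorm x + sqnorm y.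
Proof.
by rewrite /sqnorm big_split_ord; congr (_ + _); apply: eq_bigr => i _;
  rewrite ?col_mxEu ?col_mxEd.
Qed.

Lemma dotv_trmx k (u v : 'cV[R]_k) : dotv u v = (u^T *m v) 0 0.
Proof. by rewrite mxE; apply: eq_bigr => i _; rewrite mxE. Qed.

Lemma normr_dotv_le k r c (x w : 'cV[R]_k) :
  0 <= r -> sqnorm w <= r ^+ 2 * c -> `|2 * dotv x w| <= r * (sqnorm x + c).
Proof.
move=> r_ge0 w_le; have [r0|r_gt0] := eqVneq r 0.
  move: w_le; rewrite r0 expr0n mul0r => w_le0.
  have /eqP -> : w == 0 by rewrite -sqnorm_eq0 eq_le w_le0 sqnorm_ge0.
  by rewrite /dotv big1 ?mulr0 ?normr0 ?mul0r // => i _; rewrite mxE mulr0.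
have {r_gt0} r_gt0 : 0 < r by rewrite lt_def r_gt0.
rewrite -(ler_pM2l r_gt0) mulrA -expr2 mulrDr.
apply: (@le_trans _ _ (r ^+ 2 * sqnorm x + sqnorm w)); last by rewrite lerD2l.
rewrite -[r in r * _]ger0_norm // -normrM ler_norml /dotv /sqnorm.
rewrite !mulr_sumr -big_split -sumrN /=.
apply/andP; split; apply: ler_sum => i _; set a := x i 0; set b := w i 0.
- by have := sqr_ge0 (r * a + b); nra.
- by have := sqr_ge0 (r * a - b); nra.
Qed.

Lemma vnorm_unit_coord k (z : 'cV[R]_k) j : vnorm z = 1 -> `|z j 0| <= 1.
Proof.
move=> z1; rewrite -(expr_le1 (_ : 0 < 2)%N) // real_normK ?num_real //.
have <- : sqnorm z = 1 by rewrite -sqr_vnorm z1 expr1n.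
by rewrite /sqnorm (bigD1 j) //= lerDl sumr_ge0 // => i _; apply: sqr_ge0.
Qed.

Definition unit_gains n k (C : 'M[R]_(n, k)) :=
  [set vnorm (C *m z) | z in [set z : 'cV[R]_k | vnorm z = 1]].

Section Gains.
Variables n k : nat.
Variable C : 'M[R]_(n, k).

Lemma unit_gains_has_ubound : has_ubound (unit_gains C).
Proof.
pose c i := \sum_j `|C i j|.
have c_ge0 i : 0 <= c i by apply: sumr_ge0 => j _.
exists (Num.sqrt (\sum_i c i ^+ 2)) => _ [z /= z1 <-].
rewrite ler_sqrt; last by apply: sumr_ge0 => i _; apply: sqr_ge0.
apply: ler_sum => i _; rewrite mxE -real_normK ?num_real //.
rewrite ler_pXn2r ?nnegrE //.
apply: le_trans (ler_norm_sum _ _ _) _; apply: ler_sum => j _.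
by rewrite normrM ler_piMr ?vnorm_unit_coord.
Qed.

Lemma unit_gains_ge0 : lbound (unit_gains C) 0.
Proof. by move=> _ [z _ <-]; apply: vnorm_ge0. Qed.

Lemma unit_gains_eq0 : ~ (exists z : 'cV[R]_k, vnorm z = 1) -> unit_gains C = set0.
Proof.
by move=> no_unit; apply/seteqP; split=> // y [z z1 _]; apply: no_unit; exists z.
Qed.

Lemma sigma_min_no_unit : ~ (exists z : 'cV[R]_k, vnorm z = 1) -> sigma_min C = 0.
Proof.
by move=> no_unit; rewrite /sigma_min -/(unit_gains C) unit_gains_eq0 // inf0.
Qed.

Lemma vnorm_mul_le_sigma_max z : vnorm z = 1 -> vnorm (C *m z) <= sigma_max C.
Proof. by move=> z1; apply: (ub_le_sup unit_gains_has_ubound); exists z. Qed.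

Lemma sigma_min_le_vnorm_mul z : vnorm z = 1 -> sigma_min C <= vnorm (C *m z).
Proof. by move=> z1; apply: ge_inf; [exists 0; apply: unit_gains_ge0 | exists z]. Qed.

Lemma sigma_max_ge0 : 0 <= sigma_max C.
Proof.
case: (pselect (exists z : 'cV[R]_k, vnorm z = 1)) => [[z z1]|no_unit].
  exact: le_trans (vnorm_ge0 _) (vnorm_mul_le_sigma_max z1).
by rewrite /sigma_max -/(unit_gains C) unit_gains_eq0 // sup0.
Qed.

Lemma sigma_min_ge0 : 0 <= sigma_min C.
Proof.
case: (pselect (exists z : 'cV[R]_k, vnorm z = 1)) => [[z z1]|no_unit].
  by apply: lb_le_inf; [exists (vnorm (C *m z)); exists z | apply: unit_gains_ge0].
by rewrite sigma_min_no_unit.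
Qed.

Lemma sigma_min_le_max : sigma_min C <= sigma_max C.
Proof.
case: (pselect (exists z : 'cV[R]_k, vnorm z = 1)) => [[z z1]|no_unit].
  exact: le_trans (sigma_min_le_vnorm_mul z1) (vnorm_mul_le_sigma_max z1).
by rewrite sigma_min_no_unit // sigma_max_ge0.
Qed.

Lemma sqnorm_mul_unit z : z != 0 ->
  exists2 u, vnorm u = 1 & sqnorm (C *m z) = sqnorm z * vnorm (C *m u) ^+ 2.
Proof.
move=> z_neq0; set v := vnorm z.
have v_gt0 : 0 < v by rewrite sqrtr_gt0 lt_def sqnorm_eq0 z_neq0 sqnorm_ge0.
have vV : `|v^-1| = v^-1 by rewrite ger0_norm // invr_ge0 ltW.
exists (v^-1 *: z); first by rewrite vnormZ vV mulVf // gt_eqF.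
rewrite -scalemxAr vnormZ vV exprMn -!sqr_vnorm mulrA -exprMn divff ?gt_eqF //.
by rewrite expr1n mul1r.
Qed.

Lemma sqnorm_mul_le z : sqnorm (C *m z) <= sigma_max C ^+ 2 * sqnorm z.
Proof.
have [->|z_neq0] := eqVneq z 0; first by rewrite mulmx0 !sqnorm0 mulr0.
have [u u1 ->] := sqnorm_mul_unit z_neq0; rewrite mulrC.
apply: ler_wpM2r; first exact: sqnorm_ge0.
by apply: lerXn2r; rewrite ?nnegrE ?vnorm_ge0 ?sigma_max_ge0 ?vnorm_mul_le_sigma_max.
Qed.

Lemma sqnorm_mul_ge z : sigma_min C ^+ 2 * sqnorm z <= sqnorm (C *m z).
Proof.
have [->|z_neq0] := eqVneq z 0; first by rewrite mulmx0 !sqnorm0 mulr0.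
have [u u1 ->] := sqnorm_mul_unit z_neq0; rewrite [X in _ <= X]mulrC.
apply: ler_wpM2r; first exact: sqnorm_ge0.
by apply: lerXn2r; rewrite ?nnegrE ?vnorm_ge0 ?sigma_min_ge0 ?sigma_min_le_vnorm_mul.
Qed.

Lemma sigma_max_sqr_le a : 0 <= a ->
  (forall z, vnorm z = 1 -> sqnorm (C *m z) <= a) -> sigma_max C ^+ 2 <= a.
Proof.
move=> a_ge0 bound; rewrite -(sqr_sqrtr a_ge0).
apply: lerXn2r; rewrite ?nnegrE ?sigma_max_ge0 ?sqrtr_ge0 //.
case: (pselect (exists z : 'cV[R]_k, vnorm z = 1)) => [[z z1]|no_unit].
  apply: ge_sup; first by exists (vnorm (C *m z)), z.
  by move=> _ [y y1 <-]; rewrite vnormE ler_sqrt // bound.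
by rewrite /sigma_max -/(unit_gains C) unit_gains_eq0 // sup0 sqrtr_ge0.
Qed.

Lemma sigma_min_sqr_ge a : (exists z : 'cV[R]_k, vnorm z = 1) ->
  (forall z, vnorm z = 1 -> a <= sqnorm (C *m z)) -> a <= sigma_min C ^+ 2.
Proof.
move=> [z z1] bound; have [a_le0|a_gt0] := lerP a 0.
  exact: le_trans a_le0 (sqr_ge0 _).
rewrite -(sqr_sqrtr (ltW a_gt0)).
apply: lerXn2r; rewrite ?nnegrE ?sigma_min_ge0 ?sqrtr_ge0 //.
apply: lb_le_inf; first by exists (vnorm (C *m z)), z.
by move=> _ [y y1 <-]; rewrite vnormE ler_sqrt ?sqnorm_ge0 // bound.
Qed.

End Gains.

Section Block.
Variables (n d1 d2 : nat) (A : 'M[R]_(n, d1)) (B : 'M[R]_(n, d2)).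
Let smax := Num.max (sigma_max A) (sigma_max B).
Let smin := Num.min (sigma_min A) (sigma_min B).
Let rho := sigma_max (A^T *m B).

Lemma sqnorm_row_mx_mul x y :
  sqnorm (row_mx A B *m col_mx x y)
  = sqnorm (A *m x) + sqnorm (B *m y) + 2 * dotv x (A^T *m B *m y).
Proof. by rewrite mul_row_col sqnormD !dotv_trmx trmx_mul !mulmxA. Qed.

Lemma sqnorm_row_mx_mul_bounds z : vnorm z = 1 ->
  smin ^+ 2 - rho <= sqnorm (row_mx A B *m z) <= smax ^+ 2 + rho.
Proof.
rewrite -[z]vsubmxK sqnorm_row_mx_mul; set x := usubmx z; set y := dsubmx z => z1.
have xy1 : sqnorm x + sqnorm y = 1 by rewrite -sqnorm_col_mx -sqr_vnorm z1 expr1n.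
have := normr_dotv_le x (sigma_max_ge0 (A^T *m B)) (sqnorm_mul_le (A^T *m B) y).
rewrite xy1 mulr1 ler_norml -/rho => /andP[cross_lo cross_hi].
have [sA sB] : sigma_max A ^+ 2 <= smax ^+ 2 /\ sigma_max B ^+ 2 <= smax ^+ 2.
  by split; apply: lerXn2r; rewrite ?nnegrE ?le_max ?sigma_max_ge0 ?lexx ?orbT.
have [mA mB] : smin ^+ 2 <= sigma_min A ^+ 2 /\ smin ^+ 2 <= sigma_min B ^+ 2.
  by split; apply: lerXn2r; rewrite ?nnegrE ?le_min ?ge_min ?sigma_min_ge0 ?lexx ?orbT.
have upper : sqnorm (A *m x) + sqnorm (B *m y) <= smax ^+ 2.
  rewrite -[smax ^+ 2]mulr1 -xy1 mulrDr; apply: lerD.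
  - exact: le_trans (sqnorm_mul_le A x) (ler_wpM2r (sqnorm_ge0 x) sA).
  - exact: le_trans (sqnorm_mul_le B y) (ler_wpM2r (sqnorm_ge0 y) sB).
have lower : smin ^+ 2 <= sqnorm (A *m x) + sqnorm (B *m y).
  rewrite -[smin ^+ 2]mulr1 -xy1 mulrDr; apply: lerD.
  - exact: le_trans (ler_wpM2r (sqnorm_ge0 x) mA) (sqnorm_mul_ge A x).
  - exact: le_trans (ler_wpM2r (sqnorm_ge0 y) mB) (sqnorm_mul_ge B y).
by apply/andP; split; lra.
Qed.

Lemma sigma_max_row_mx_sqr : sigma_max (row_mx A B) ^+ 2 <= smax ^+ 2 + rho.
Proof.
apply: sigma_max_sqr_le => [|z z1]; first by rewrite addr_ge0 ?sqr_ge0 ?sigma_max_ge0.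
by case/andP: (sqnorm_row_mx_mul_bounds z1).
Qed.

Lemma sigma_min_row_mx_sqr : smin ^+ 2 - rho <= sigma_min (row_mx A B) ^+ 2.
Proof.
case: (pselect (exists x : 'cV[R]_d1, vnorm x = 1)) => [[x x1]|no_unit].
  apply: sigma_min_sqr_ge => [|z z1]; last by case/andP: (sqnorm_row_mx_mul_bounds z1).
  by exists (col_mx x 0); rewrite vnormE sqnorm_col_mx sqnorm0 addr0 -vnormE.
(* Here d1 = 0, so sigma_min A is the junk value inf set0 = 0. *)
have -> : smin = 0 by rewrite /smin sigma_min_no_unit // min_l // sigma_min_ge0.
by rewrite expr0n sub0r (le_trans _ (sqr_ge0 _)) // oppr_le0 sigma_max_ge0.
Qed.

End Block.
End Vectors.

Unset Implicit Arguments.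

Theorem mainTheorem1 (R : realType) (n d1 d2 : nat)
    (A : 'M[R]_(n, d1)) (B : 'M[R]_(n, d2)) :
  let M := row_mx A B in
  let smax := Num.max (sigma_max A) (sigma_max B) in
  let smin := Num.min (sigma_min A) (sigma_min B) in
  let rho := spec_norm (A^T *m B) in
  let tau := Num.max (sigma_max A) (sigma_max B) /
             Num.min (sigma_max A) (sigma_max B) in
  let kmax := Num.max (kappa A) (kappa B) in
  rho < smin ^+ 2 ->
  [/\ sigma_max M ^+ 2 <= smax ^+ 2 + rho,
      sigma_min M ^+ 2 >= smin ^+ 2 - rho,
      kappa M <= Num.sqrt ((smax ^+ 2 + rho) / (smin ^+ 2 - rho)),
      Num.sqrt ((smax ^+ 2 + rho) / (smin ^+ 2 - rho))
        <= Num.sqrt ((1 + rho / smax ^+ 2) / (1 - rho / smin ^+ 2)) * (smax / smin)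
    & Num.sqrt ((1 + rho / smax ^+ 2) / (1 - rho / smin ^+ 2)) * (smax / smin)
        <= tau * Num.sqrt ((1 + rho / smax ^+ 2) / (1 - rho / smin ^+ 2)) * kmax].
Proof.
move=> M smax smin rho tau kmax rho_lt.
have rho_ge0 : 0 <= rho := sigma_max_ge0 _.
have smin_gt0 : 0 < smin.
  have : 0 <= smin by rewrite le_min !sigma_min_ge0.
  by have := le_lt_trans rho_ge0 rho_lt; nra.
have [mA_gt0 mB_gt0] : 0 < sigma_min A /\ 0 < sigma_min B.
  by apply/andP; rewrite -lt_min.
have smax_gt0 : 0 < smax.
  by rewrite lt_max (lt_le_trans mA_gt0) ?sigma_min_le_max.
have hmax := sigma_max_row_mx_sqr A B; have hmin := sigma_min_row_mx_sqr A B.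
split => //.
- apply: ler_div_sqrt; rewrite ?sigma_max_ge0 ?sigma_min_ge0 ?subr_gt0 //.
- by rewrite sqrt_div_factor.
- rewrite [tau * _]mulrC -mulrA; apply: ler_wpM2l; first exact: sqrtr_ge0.
  by apply: max_div_min_le; rewrite ?sigma_min_le_max.
Qed.
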